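(* Let $m\ge1$, $N\ge1$, let $F_1,\ldots,F_m:\{0,\ldots,2^N-1\}^m\to\{0,\ldots,2^N-1\}$ be arbitrary, and let $g=(g_1,\ldots,g_m)$ be the map on the decimal representation described in the context. Then at every point, with the integer parts $x_1,\ldots,x_m$ and the first sequence terms $w_1^1,\ldots,w_m^1$ held fixed, one has $\partial g_i/\partial y_i=2^N$ and $\partial g_i/\partial y_j=0$ for $i\neq j$, so the Jacobian matrix is $J=\mathrm{diag}(2^N,\ldots,2^N)$; consequently, with $\Phi_n=J^n$ and $\mu_k(\Phi_n^T\Phi_n)$ the $k$-th eigenvalue of $\Phi_n^T\Phi_n$, every Lyapunov exponent $\lambda(y_k)=\lim_{n\to+\infty}\frac{1}{2n}\ln|\mu_k(\Phi_n^T\Phi_n)|$, $k=1,\ldots,m$, equals $N\ln 2$.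
   Context: Take $Q=0$, $P=N$, so $D=\{0,1,\ldots,2^N-1\}$, each element written with $N$ binary digits; $x\cdot y$, $x+y$, $\overline{x}$ denote bitwise AND, OR and NOT on $N$-bit strings. A state consists of sequences $w_i=w_i^1w_i^2\ldots$ with $w_i^k\in D$ ($i=1,\ldots,m$) and integers $x_1,\ldots,x_m\in D$; one iteration maps it to the state with sequences $\sigma(w_i)=w_i^2w_i^3\ldots$ and integers $x_i'=(x_i\cdot\overline{w_i^1})+(F_i(x_1,\ldots,x_m)\cdot w_i^1)$. The decimal representation of a state is $y=(y_1,\ldots,y_m)$ with $y_i=x_i+\sum_{k=1}^{\infty}w_i^k2^{-Nk}$, and the induced map is $g_i(y_1,\ldots,y_m)=(x_i\cdot\overline{w_i^1})+(F_i(x_1,\ldots,x_m)\cdot w_i^1)+2^N\sum_{k=2}^{\infty}w_i^k2^{-Nk}$, i.e. the decimal representation of the image state. Partial derivatives are taken by varying only the tail terms $w_i^k$, $k\ge2$ (so that the integer parts and the first terms $w_i^1$ stay unchanged). *)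

From mathcomp Require Import all_boot all_order all_algebra.
From mathcomp Require Import all_classical all_reals all_analysis.
Set Implicit Arguments. Unset Strict Implicit. Unset Printing Implicit Defensive.
Import Order.TTheory GRing.Theory Num.Theory.
Local Open Scope ring_scope.

(* A state: integers x_i in D = {0,..,2^N-1} and sequences w_i over D.
   Convention: [sw s i k] is the term w_i^{k+1} (0-based index k). *)
Record state (m N : nat) := State {
  sx : 'I_m -> 'I_(2 ^ N)%N ;
  sw : 'I_m -> nat -> 'I_(2 ^ N)%N }.

(* bitwise NOT on N-bit strings *)
Definition bnot (N a : nat) : nat := ((2 ^ N).-1 - a)%N.

Definition next_int (m N : nat) (F : 'I_m -> ('I_m -> 'I_(2 ^ N)%N) -> 'I_(2 ^ N)%N)
  (s : state m N) (i : 'I_m) : nat :=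
  Nat.lor (Nat.land (sx s i) (bnot N (sw s i 0)))
          (Nat.land (F i (sx s)) (sw s i 0)).

Definition tsum (R : realType) (a : nat) (u : nat -> R) : R :=
  limn (fun n => \sum_(a <= k < n) u k).

Definition decrep (R : realType) (m N : nat) (s : state m N) (i : 'I_m) : R :=
  (sx s i)%:R + tsum 1 (fun k => (sw s i k.-1)%:R * (2%:R ^- (N * k))).

Definition gmap (R : realType) (m N : nat)
  (F : 'I_m -> ('I_m -> 'I_(2 ^ N)%N) -> 'I_(2 ^ N)%N) (s : state m N) (i : 'I_m) : R :=
  (next_int F s i)%:R +
  2%:R ^+ N * tsum 2 (fun k => (sw s i k.-1)%:R * (2%:R ^- (N * k))).

Definition tail_variation (m N : nat) (s s' : state m N) (j : 'I_m) : Prop :=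
  sx s' = sx s /\ (forall l, l != j -> sw s' l = sw s l) /\ sw s' j 0 = sw s j 0.

Definition partial_deriv (R : realType) (m N : nat)
  (F : 'I_m -> ('I_m -> 'I_(2 ^ N)%N) -> 'I_(2 ^ N)%N) (s : state m N) (i j : 'I_m) (L : R) : Prop :=
  (forall d : R, 0 < d -> exists s', tail_variation s s' j /\
      0 < `|decrep R s' j - decrep R s j| < d) /\
  (forall eps : R, 0 < eps -> exists2 d : R, 0 < d & forall s', tail_variation s s' j ->
      0 < `|decrep R s' j - decrep R s j| < d ->
      `|(gmap R F s' i - gmap R F s i) / (decrep R s' j - decrep R s j) - L| < eps).

Definition is_jacobian (R : realType) (m N : nat)
  (F : 'I_m -> ('I_m -> 'I_(2 ^ N)%N) -> 'I_(2 ^ N)%N) (s : state m N) (J : 'M[R]_m) : Prop :=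
  forall i j, partial_deriv F s i j (J i j).

Fixpoint mxpow (R : realType) (m : nat) (J : 'M[R]_m) (n : nat) : 'M[R]_m :=
  match n with 0 => 1%:M | n'.+1 => J *m mxpow J n' end.

(* Varying only the tail terms w_j^k (k >= 2) keeps the integer parts and the
   first terms, hence every x_i', unchanged; it changes y_j and the tail sum
   occurring in g_j by the same amount, which the shift multiplies by 2^N.  So
   every difference quotient of g_i in the direction y_j is exactly 2^N if
   i = j and 0 otherwise.  Changing a single far-away term gives tail
   variations of arbitrarily small nonzero size, so these partial derivatives
   exist and are unique: J = 2^N I.  Then Phi_n^T Phi_n = 2^(2Nn) I, whose only
   eigenvalue yields the exponent ln(2^(2Nn)) / 2n = N ln 2. *)

From mathcomp Require Import all_boot all_order all_algebra.
From mathcomp Require Import all_classical all_reals all_analysis.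
From mathcomp Require Import ring lra.
Import Order.TTheory GRing.Theory Num.Theory.
Import numFieldNormedType.Exports.
Local Open Scope classical_set_scope.
Local Open Scope ring_scope.

Section SeriesTail.
Context {R : realType}.

Lemma tsumS {a : nat} {u : nat -> R} :
  cvgn (fun n => \sum_(a.+1 <= k < n) u k) -> tsum a u = u a + tsum a.+1 u.
Proof.
move=> cvg_u; apply: (cvg_lim (@Rhausdorff R)).
apply: cvg_trans (cvgD (cvg_cst (u a)) cvg_u).
apply: near_eq_cvg; near=> n; rewrite [RHS]big_ltn //.
by near: n; exists a.+1.
Unshelve. all: by end_near.
Qed.

Lemma tsum_update (a k : nat) (u v : nat -> R) : (a <= k)%N ->
  (forall l, l != k -> v l = u l) -> cvgn (fun n => \sum_(a <= l < n) u l) ->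
  tsum a v = tsum a u + (v k - u k).
Proof.
move=> ak vu cvg_u; apply: (cvg_lim (@Rhausdorff R)).
apply: cvg_trans (cvgD cvg_u (cvg_cst (v k - u k))).
apply: near_eq_cvg; near=> n.
have kn : (k < n)%N by near: n; exists k.+1.
have split_at_k w : (forall l, l != k -> w l = u l) ->
    \sum_(a <= l < n) w l = \sum_(a <= l < k) u l + w k + \sum_(k.+1 <= l < n) u l.
  move=> wu; rewrite (big_cat_nat ak (ltnW kn)) (big_ltn kn) /= addrA.
  congr (_ + _ + _); apply: eq_big_nat => l /andP[lo hi].
  - by rewrite wu // ltn_eqF.
  - by rewrite wu // gtn_eqF.
by rewrite fctE (split_at_k v vu) (split_at_k u (fun _ _ => erefl)); lra.
Unshelve. all: by end_near.
Qed.

End SeriesTail.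

(* The summand w_j^k 2^(-Nk) of [decrep]; only [k >= 1] is meaningful. *)
Definition digit_term (R : realType) {m N : nat} (s : state m N) (j : 'I_m) (k : nat) : R :=
  (sw s j k.-1)%:R * 2%:R ^- (N * k).

(* Replaces [sw s j k], i.e. the term w_j^(k+1) of the paper, by [w]. *)
Definition set_digit {m N : nat} (s : state m N) (j : 'I_m) (k : nat) (w : 'I_(2 ^ N)) :
    state m N :=
  State (sx s) (fun l n => if (l == j) && (n == k) then w else sw s l n).

Section DecimalRepresentation.
Context {R : realType} {m N : nat}.
Hypothesis N_gt0 : (0 < N)%N.
Implicit Types (s : state m N) (j : 'I_m).

Lemma digit_term_ge0 s j k : 0 <= digit_term R s j k.
Proof. by rewrite mulr_ge0 // invr_ge0 exprn_ge0. Qed.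

Lemma digit_term_le_geometric s j k :
  digit_term R s j k <= geometric (2%:R ^+ N) (2%:R^-1) k.
Proof.
rewrite /digit_term /geometric /=; apply: ler_pM.
- by [].
- by rewrite invr_ge0 exprn_ge0.
- by rewrite -natrX ler_nat ltnW.
- rewrite exprVn lef_pV2 ?posrE ?exprn_gt0 // -!natrX ler_nat.
  by rewrite leq_pexp2l // leq_pmull.
Qed.

Lemma cvg_digit_series s j a : cvgn (fun n => \sum_(a <= k < n) digit_term R s j k).
Proof.
apply: nondecreasing_is_cvgn.
  by apply: nondecreasing_series => k _ _; apply: digit_term_ge0.
exists (2%:R ^+ N / (1 - 2%:R^-1)) => _ [n _ <-].
have half_lt1 : `|2%:R^-1 : R| < 1 by rewrite ger0_norm ?invr_ge0 // invf_lt1 // ltr1n.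
apply: le_trans (geometric_le_lim n (exprn_ge0 N (ler0n R 2)) _ half_lt1) => //.
apply: le_trans (ler_sum _ (fun k _ => digit_term_le_geometric s j k)) _.
rewrite /series /=; have [an|na] := leqP a n.
  by rewrite [leRHS](big_cat_nat (leq0n a) an) lerDr sumr_ge0.
by rewrite big_geq ?(ltnW na) // sumr_ge0.
Qed.

Lemma decrepE s j :
  decrep R s j = (sx s j)%:R + digit_term R s j 1 + tsum 2 (digit_term R s j).
Proof. by rewrite /decrep (tsumS (cvg_digit_series s j 2)) addrA. Qed.

Section TailVariation.
Variables (s s' : state m N) (j : 'I_m).
Hypothesis tv : tail_variation s s' j.

Lemma next_int_tail_variation F i : next_int F s' i = next_int F s i.
Proof.
rewrite /next_int; have [-> [sw_eq sw0]] := tv.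
by have [->|ij] := eqVneq i j; rewrite ?sw0 ?sw_eq.
Qed.

Lemma digit_term_tail_variation i k :
  (i != j) || (k == 1)%N -> digit_term R s' i k = digit_term R s i k.
Proof.
have [_ [sw_eq sw0]] := tv; rewrite /digit_term.
case/orP => [/sw_eq -> // | /eqP -> /=].
by have [->|/sw_eq ->] := eqVneq i j; rewrite ?sw0.
Qed.

Lemma decrep_sub_tail_variation :
  decrep R s' j - decrep R s j = tsum 2 (digit_term R s' j) - tsum 2 (digit_term R s j).
Proof.
have [sx_eq _] := tv.
rewrite !decrepE sx_eq (digit_term_tail_variation j 1) ?eqxx ?orbT //; lra.
Qed.

Lemma gmap_sub_tail_variation F i : gmap R F s' i - gmap R F s i =
  2%:R ^+ N * (tsum 2 (digit_term R s' i) - tsum 2 (digit_term R s i)).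
Proof. by rewrite /gmap next_int_tail_variation mulrBr; rewrite /digit_term; lra. Qed.

Lemma difference_quotient_tail_variation F i :
  decrep R s' j != decrep R s j ->
  (gmap R F s' i - gmap R F s i) / (decrep R s' j - decrep R s j) =
  if i == j then 2%:R ^+ N else 0.
Proof.
rewrite -subr_eq0 gmap_sub_tail_variation; have [-> | ij] := eqVneq i j.
  by rewrite decrep_sub_tail_variation => nz; rewrite mulfK.
have same : digit_term R s' i = digit_term R s i.
  by apply/funext => k; rewrite digit_term_tail_variation ?ij.
by rewrite same subrr mulr0 mul0r.
Qed.

End TailVariation.

Lemma tail_variation_set_digit s j k w :
  (0 < k)%N -> tail_variation s (set_digit s j k w) j.
Proof.
move=> k_gt0; split=> //; split=> [l lj|]; last by rewrite /= eqxx ltn_eqF.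
by apply/funext => n /=; rewrite (negbTE lj).
Qed.

Lemma decrep_sub_set_digit s j k w : (0 < k)%N ->
  decrep R (set_digit s j k w) j - decrep R s j =
  ((w : nat)%:R - (sw s j k)%:R) * 2%:R ^- (N * k.+1).
Proof.
move=> k_gt0; rewrite /decrep (tsum_update 1 k.+1 (digit_term R s j)) //.
- by rewrite /digit_term /= !eqxx -mulrBl; lra.
- move=> [|l] lk; rewrite /digit_term /=; first by rewrite (ltn_eqF k_gt0) andbF.
  have [lk'|_] := eqVneq l k; last by rewrite andbF.
  by rewrite lk' eqxx in lk.
- exact: cvg_digit_series.
Qed.

Lemma exists_other_digit (x : 'I_(2 ^ N)) : exists w : 'I_(2 ^ N), w != x.
Proof.
have two_le : (1 < 2 ^ N)%N by rewrite -{1}(expn0 2) ltn_exp2l.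
have [x0|x_neq0] := eqVneq (x : nat) 0%N.
  by exists (Ordinal two_le); rewrite -val_eqE /= x0.
by exists (Ordinal (ltnW two_le)); rewrite -val_eqE /= eq_sym.
Qed.

Lemma exists_small_digit_weight {d : R} : 0 < d ->
  exists2 k, (0 < k)%N & 2%:R ^+ N * 2%:R ^- (N * k.+1) < d.
Proof.
(* With k = truncn (1/d) + 1 one has 2^(Nk) >= 2^k > k > 1/d. *)
move=> d_gt0; exists (Num.truncn d^-1).+1 => //.
set k := (Num.truncn d^-1).+1.
rewrite mulnSr exprD invfM mulrA mulrAC divff ?mul1r ?expf_neq0 ?pnatr_eq0 //.
rewrite -[d]invrK ltf_pV2 ?posrE ?invr_gt0 ?exprn_gt0 //.
apply: (lt_le_trans (truncnS_gt _)); rewrite -natrX ler_nat.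
apply: (leq_trans (ltnW (ltn_expl k (isT : (1 < 2)%N)))).
by rewrite leq_pexp2l // leq_pmull.
Qed.

Lemma exists_small_tail_variation s j {d : R} : 0 < d ->
  exists s', tail_variation s s' j /\ 0 < `|decrep R s' j - decrep R s j| < d.
Proof.
move=> d_gt0; have [k k_gt0 small] := exists_small_digit_weight d_gt0.
have [w w_neq] := exists_other_digit (sw s j k).
exists (set_digit s j k w); split; first exact: tail_variation_set_digit.
rewrite decrep_sub_set_digit // normrM [X in _ * X]gtr0_norm ?invr_gt0 ?exprn_gt0 //.
apply/andP; split.
  by rewrite mulr_gt0 ?invr_gt0 ?exprn_gt0 // normr_gt0 subr_eq0 eqr_nat.
apply: le_lt_trans small; rewrite ler_wpM2r ?invr_ge0 ?exprn_ge0 // -natrX.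
have := ltn_ord w; have := ltn_ord (sw s j k); rewrite -!(ltr_nat R).
have := ler0n R w; have := ler0n R (sw s j k).
by rewrite ler_norml; lra.
Qed.

Variable F : 'I_m -> ('I_m -> 'I_(2 ^ N)%N) -> 'I_(2 ^ N)%N.

Lemma partial_deriv_gmap s i j :
  partial_deriv F s i j (if i == j then 2%:R ^+ N else 0 : R).
Proof.
split=> [d|eps eps_gt0]; first exact: exists_small_tail_variation.
exists 1 => // s' tv /andP[+ _]; rewrite normr_gt0 subr_eq0 => nz.
by rewrite difference_quotient_tail_variation // subrr normr0.
Qed.

Lemma partial_deriv_gmap_unique {s i j} {L : R} : partial_deriv F s i j L ->
  L = if i == j then 2%:R ^+ N else 0.
Proof.
move=> [_ cvg_quot]; apply/eqP; rewrite -subr_eq0; apply: contraT.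
set c := (if i == j then _ else _); rewrite -normr_gt0.
move=> /cvg_quot[d d_gt0 near_L].
have [s' [tv dist]] := exists_small_tail_variation s j d_gt0.
have nz : decrep R s' j != decrep R s j.
  by case/andP: dist; rewrite normr_gt0 subr_eq0.
by move: (near_L s' tv dist); rewrite difference_quotient_tail_variation // distrC ltxx.
Qed.

End DecimalRepresentation.

Lemma eigenvalue_scalar_mx (K : fieldType) (n : nat) (a b : K) :
  (0 < n)%N -> eigenvalue (a%:M : 'M[K]_n) b = (b == a).
Proof.
move=> n_gt0; apply/eigenvalueP/eqP => [[v] | ->].
  rewrite mul_mx_scalar => /eqP; rewrite -subr_eq0 -scalerBl scaler_eq0 subr_eq0.
  by move=> /orP[/eqP -> // | /eqP ->]; rewrite eqxx.
exists (const_mx 1); first by rewrite mul_mx_scalar.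
by apply/eqP => /matrixP /(_ 0 (Ordinal n_gt0)); rewrite !mxE => /eqP; rewrite oner_eq0.
Qed.

Lemma mxpow_scalar (R : realType) (m : nat) (a : R) (n : nat) :
  mxpow (a%:M : 'M[R]_m) n = (a ^+ n)%:M.
Proof. by elim: n => [|n IH] //=; rewrite IH -scalar_mxM exprS. Qed.

Lemma lyapunov_exponent_scalar (R : realType) (a : R) : 0 < a ->
  (fun n => ln `|a ^+ n * a ^+ n| / (2 * n%:R)) @ \oo --> ln a.
Proof.
move=> a_gt0; apply: cvg_trans (near_eq_cvg _) (cvg_cst (ln a)); near=> n.
have n_neq0 : n%:R != 0 :> R by rewrite pnatr_eq0 -lt0n; near: n; exists 1%N.
rewrite -expr2 -exprM ger0_norm ?exprn_ge0 ?ltW // lnXn // -[ln a *+ _]mulr_natr natrM.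
by field; rewrite n_neq0.
Unshelve. all: by end_near.
Qed.

Theorem mainTheorem5 (R : realType) (m N : nat) (hm : (0 < m)%N) (hN : (0 < N)%N)
  (F : 'I_m -> ('I_m -> 'I_(2 ^ N)%N) -> 'I_(2 ^ N)%N) :
  forall s : state m N,
    (forall i, partial_deriv F s i i (2%:R ^+ N : R)) /\
    (forall i j, i != j -> partial_deriv F s i j (0 : R)) /\
    is_jacobian F s ((2%:R ^+ N : R)%:M) /\
    (forall J : 'M[R]_m, is_jacobian F s J ->
       J = (2%:R ^+ N)%:M /\
       (forall n, exists mu : R, eigenvalue ((mxpow J n)^T *m mxpow J n) mu) /\
       (forall mu : nat -> R,
          (forall n, eigenvalue ((mxpow J n)^T *m mxpow J n) (mu n)) ->
          (fun n => ln `|mu n| / (2 * n%:R)) @ \oo --> N%:R * ln (2 : R))).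
Proof.
move=> s; set a : R := 2%:R ^+ N.
have pd := partial_deriv_gmap (R := R) hN F s.
have scalar_entry i j : (a%:M : 'M[R]_m) i j = if i == j then a else 0.
  by rewrite mxE; case: eqP.
have jac : is_jacobian F s a%:M by move=> i j; rewrite scalar_entry.
split; first by move=> i; have := pd i i; rewrite eqxx.
split; first by move=> i j /negbTE ij; have := pd i j; rewrite ij.
split=> // J jac_J.
have -> : J = a%:M.
  by apply/matrixP => i j; rewrite scalar_entry (partial_deriv_gmap_unique hN F (jac_J i j)).
have gram n : (mxpow a%:M n)^T *m mxpow a%:M n = (a ^+ n * a ^+ n)%:M.
  by rewrite mxpow_scalar tr_scalar_mx -scalar_mxM.
split=> //; split=> [n | mu eig_mu].
  by exists (a ^+ n * a ^+ n); rewrite gram eigenvalue_scalar_mx.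
have -> : mu = fun n => a ^+ n * a ^+ n.
  by apply/funext => n; move: (eig_mu n); rewrite gram eigenvalue_scalar_mx // => /eqP.
by rewrite mulr_natl -lnXn //; apply: lyapunov_exponent_scalar; rewrite exprn_gt0.
Qed.
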